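(* (i) The equation $x^4-y^4=iz^2$ has only trivial solutions in Gaussian integers $x,y,z\in\mathbb{Z}[i]$, i.e. every solution satisfies $xyz=0$. (ii) The only nontrivial solutions $(x,y,z)\in\mathbb{Z}[i]^3$ (i.e. with $xyz\neq 0$) of the equation $x^4+y^4=iz^2$ satisfying $\gcd(x,y,z)=1$ are the triples $(x,y,z)$ with $x,y\in\{\pm i,\pm 1\}$ and $z=\pm i(1+i)$.
   Context: Here $i=\sqrt{-1}$ and $\mathbb{Z}[i]$ denotes the ring of Gaussian integers. A solution $(x,y,z)$ is called trivial if $xyz=0$. *)

From mathcomp Require Import all_boot all_order all_algebra all_field.
Set Implicit Arguments. Unset Strict Implicit. Unset Printing Implicit Defensive.
Import Order.TTheory GRing.Theory Num.Theory.
Local Open Scope ring_scope.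

(* Gaussian integers Z[i], realised inside the algebraic complex numbers algC:
   z is a Gaussian integer iff its real and imaginary parts are rational integers. *)
Definition gaussint (z : algC) : bool := ('Re z \in Num.int) && ('Im z \in Num.int).

Definition gdvd (d x : algC) : Prop := exists2 q, gaussint q & x = d * q.

Definition gunit (u : algC) : Prop := gaussint u /\ gdvd u 1.

Definition gcoprime3 (x y z : algC) : Prop :=
  forall d, gaussint d -> gdvd d x -> gdvd d y -> gdvd d z -> gunit d.

(* Both parts reduce to Hilbert's theorem that x^4 +- y^4 = z^2 has only trivial solutions in
   Z[i]. For (i), z^4 + (x^2 + y^2)^4 = (2 x y (x^2 + y^2))^2. For (ii), S = z + (1 - i) x y and
   T = x^2 - y^2 satisfy S^4 - T^4 = ((1 - i) S (x^2 + y^2))^2, which forces y^2 = +-x^2; then x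
   divides y and z, so x is a unit by primitivity.
   Hilbert's theorem is proved by Fermat's descent on the norm of the variable divisible by
   1 + i, using that coprime Gaussian integers whose product is a unit times a square are
   themselves units times squares, together with congruences modulo powers of 1 + i. When x and
   y are both odd, x^4 + y^4 = z^2 fails modulo 8, and x^4 - y^4 = z^2 is turned by a second
   factorisation into a solution of the odd-even case. *)

From mathcomp Require Import all_boot all_order all_algebra all_field.
From mathcomp Require Import ring zify.
From Stdlib Require Import Classical.
Set Implicit Arguments. Unset Strict Implicit. Unset Printing Implicit Defensive.
Import Order.TTheory GRing.Theory Num.Theory.
Local Open Scope ring_scope.

(** * Gaussian integers, norms and units *)

Lemma gaussintD x y : gaussint x -> gaussint y -> gaussint (x + y).
Proof. by case/andP=> ? ? /andP[? ?]; apply/andP; rewrite !raddfD; split; apply: rpredD. Qed.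

Lemma gaussintN x : gaussint x -> gaussint (- x).
Proof. by case/andP=> ? ?; apply/andP; rewrite !raddfN; split; rewrite rpredN. Qed.

Lemma gaussintB x y : gaussint x -> gaussint y -> gaussint (x - y).
Proof. by move=> hx hy; apply: gaussintD => //; apply: gaussintN. Qed.

Lemma gaussintM x y : gaussint x -> gaussint y -> gaussint (x * y).
Proof.
case/andP=> ? ? /andP[? ?]; apply/andP; rewrite ReM ImM.
by split; [apply: rpredB | apply: rpredD]; apply: rpredM.
Qed.

Lemma gaussintJ x : gaussint x -> gaussint x^*.
Proof. by case/andP=> ? ?; apply/andP; rewrite Re_conj Im_conj rpredN. Qed.

Lemma gaussint_int (m : int) : gaussint m%:~R.
Proof.
have mR : (m%:~R : algC) \is Num.real by rewrite Rreal_int ?intr_int.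
apply/andP; rewrite -[m%:~R]addr0 -[X in _ + X](mulr0 'i).
by rewrite Re_rect ?Im_rect ?rpred0 ?intr_int.
Qed.

Lemma gaussint_nat n : gaussint n%:R. Proof. exact: (gaussint_int n). Qed.
Lemma gaussint0 : gaussint 0. Proof. exact: (gaussint_int 0). Qed.
Lemma gaussint1 : gaussint 1. Proof. exact: (gaussint_int 1). Qed.
Lemma gaussinti : gaussint 'i. Proof. by apply/andP; rewrite Re_i Im_i rpred0 rpred1. Qed.

Lemma gaussintX x n : gaussint x -> gaussint (x ^+ n).
Proof. by move=> hx; elim: n => [|n IH]; rewrite ?gaussint1 // exprS gaussintM. Qed.

Lemma gaussintP z : gaussint z -> exists m n : int, z = m%:~R + 'i * n%:~R.
Proof. by case/andP=> /intrP[m hm] /intrP[n hn]; exists m, n; rewrite -hm -hn -Crect. Qed.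

Lemma gaussint_rect (m n : int) : gaussint (m%:~R + 'i * n%:~R).
Proof. by rewrite gaussintD ?gaussintM ?gaussinti ?gaussint_int. Qed.

#[local] Hint Resolve gaussint0 gaussint1 gaussinti gaussint_int gaussint_nat : core.

Ltac gaussint_closed := repeat match goal with
  | |- is_true (gaussint (_ + _)) => apply: gaussintD
  | |- is_true (gaussint (- _)) => apply: gaussintN
  | |- is_true (gaussint (_ * _)) => apply: gaussintM
  | |- is_true (gaussint (_ ^+ _)) => apply: gaussintX
  | |- is_true (gaussint _) => by []
  end.

Definition gnorm (z : algC) : nat := Num.truncn (`|z| ^+ 2).

Lemma gnormE z : gaussint z -> (gnorm z)%:R = `|z| ^+ 2.
Proof.
by case/andP=> hr hi; rewrite /gnorm truncnK // normC2_Re_Im rpredD ?natr_exp_even.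
Qed.

Lemma gnormM x y : gaussint x -> gaussint y -> gnorm (x * y) = (gnorm x * gnorm y)%N.
Proof.
move=> hx hy; apply/eqP; rewrite -(eqr_nat algC) natrM !gnormE ?gaussintM //.
by rewrite normrM exprMn.
Qed.

Lemma gnorm_eq0 x : gaussint x -> (gnorm x == 0%N) = (x == 0).
Proof. by move=> hx; rewrite -(eqr_nat algC) gnormE // sqrf_eq0 normr_eq0. Qed.

Lemma gnorm1 : gnorm 1 = 1%N.
Proof. by rewrite /gnorm normr1 expr1n truncn1. Qed.

Lemma gnorm_rect (m n : int) : gnorm (m%:~R + 'i * n%:~R) = absz (m ^+ 2 + n ^+ 2).
Proof.
apply/eqP; rewrite -(eqr_nat algC) gnormE ?gaussint_rect //.
rewrite normC2_rect ?Rreal_int ?intr_int // pmulrn abszE ger0_norm ?addr_ge0 ?sqr_ge0 //.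
by rewrite rmorphD !rmorphXn.
Qed.

Lemma gnorm1_cases u : gaussint u -> gnorm u = 1%N ->
  [\/ u = 1, u = -1, u = 'i | u = - 'i].
Proof.
move=> /gaussintP[m [n ->]]; rewrite gnorm_rect => h.
have {}h : m ^+ 2 + n ^+ 2 = 1 by rewrite -[LHS]gez0_abs ?h ?addr_ge0 ?sqr_ge0.
have : (m == 0) && ((n == 1) || (n == -1)) || (n == 0) && ((m == 1) || (m == -1)).
  by lia.
case/orP=> /andP[/eqP-> /orP[]/eqP->].
- by constructor 3; rewrite mulr1 add0r.
- by constructor 4; rewrite mulrN1 add0r.
- by constructor 1; rewrite mulr0 addr0.
- by constructor 2; rewrite mulr0 addr0.
Qed.

Lemma gdvdd x : gdvd x x.
Proof. by exists 1; rewrite ?mulr1. Qed.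

Lemma gdvd0 x : gdvd x 0.
Proof. by exists 0; rewrite ?mulr0. Qed.

Lemma gdvd1 x : gaussint x -> gdvd 1 x.
Proof. by exists x; rewrite ?mul1r. Qed.

Lemma gdvd_trans d x y : gdvd d x -> gdvd x y -> gdvd d y.
Proof. by move=> [q hq ->] [r hr ->]; exists (q * r); [apply: gaussintM | rewrite mulrA]. Qed.

Lemma gdvd_mulr d x y : gaussint y -> gdvd d x -> gdvd d (x * y).
Proof. by move=> hy [q hq ->]; exists (q * y); [apply: gaussintM | rewrite mulrA]. Qed.

Lemma gdvd_mull d x y : gaussint y -> gdvd d x -> gdvd d (y * x).
Proof. by move=> hy h; rewrite mulrC; apply: gdvd_mulr. Qed.

Lemma gdvd_mul d1 d2 x y : gdvd d1 x -> gdvd d2 y -> gdvd (d1 * d2) (x * y).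
Proof. by move=> [q hq ->] [r hr ->]; exists (q * r); [apply: gaussintM | rewrite mulrACA]. Qed.

Lemma gdvdD d x y : gdvd d x -> gdvd d y -> gdvd d (x + y).
Proof. by move=> [q hq ->] [r hr ->]; exists (q + r); [apply: gaussintD | rewrite mulrDr]. Qed.

Lemma gdvdN d x : gdvd d x -> gdvd d (- x).
Proof. by move=> [q hq ->]; exists (- q); [apply: gaussintN | rewrite mulrN]. Qed.

Lemma gdvdB d x y : gdvd d x -> gdvd d y -> gdvd d (x - y).
Proof. by move=> h1 h2; apply: gdvdD => //; apply: gdvdN. Qed.

Lemma gdvd_gaussint d x : gaussint d -> gdvd d x -> gaussint x.
Proof. by move=> hd [q hq ->]; apply: gaussintM. Qed.

Lemma gdvd_gnorm d x : gaussint d -> gdvd d x -> (gnorm d %| gnorm x)%N.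
Proof. by move=> hd [q hq ->]; rewrite gnormM // dvdn_mulr. Qed.

Lemma gdvd_gnorm_le d x : gaussint d -> gdvd d x -> x != 0 -> (gnorm d <= gnorm x)%N.
Proof.
move=> hd hdx x0; apply: dvdn_leq; last exact: gdvd_gnorm.
by rewrite lt0n gnorm_eq0 // (gdvd_gaussint hd hdx).
Qed.

Lemma gunit_gaussint u : gunit u -> gaussint u.
Proof. by case. Qed.

Lemma gunit_gnorm u : gunit u -> gnorm u = 1%N.
Proof.
move=> [hu [q hq /esym/(congr1 gnorm)]]; rewrite gnormM // gnorm1.
by move/eqP; rewrite muln_eq1 => /andP[/eqP].
Qed.

Lemma gnorm1_gunit u : gaussint u -> gnorm u = 1%N -> gunit u.
Proof.
move=> hu h1; split=> //; exists u^*; first exact: gaussintJ.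
by rewrite -normCK -gnormE // h1.
Qed.

Lemma gunitP u : gunit u <-> [\/ u = 1, u = -1, u = 'i | u = - 'i].
Proof.
split=> [uU | hu]; first exact: gnorm1_cases (gunit_gaussint uU) (gunit_gnorm uU).
have gN1 : gaussint (-1) := gaussintN gaussint1.
have gNi : gaussint (- 'i) := gaussintN gaussinti.
case: hu => ->; split=> //.
- exact: gdvdd.
- by exists (-1); rewrite // mulrNN mulr1.
- by exists (- 'i); rewrite // mulrN mulCii opprK.
- by exists 'i; rewrite // mulNr mulCii opprK.
Qed.

Lemma gunit1 : gunit 1. Proof. by apply/gunitP; constructor 1. Qed.
Lemma gunitN1 : gunit (-1). Proof. by apply/gunitP; constructor 2. Qed.
Lemma gunit_i : gunit 'i. Proof. by apply/gunitP; constructor 3. Qed.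
Lemma gunit_Ni : gunit (- 'i). Proof. by apply/gunitP; constructor 4. Qed.

Lemma gunitM u v : gunit u -> gunit v -> gunit (u * v).
Proof.
move=> [hu [q hq equ]] [hv [r hr evr]]; split; first exact: gaussintM.
by exists (q * r); [apply: gaussintM | rewrite mulrACA -equ -evr mulr1].
Qed.

Lemma gunit_neq0 u : gunit u -> u != 0.
Proof. by move=> [_ [q _ e1]]; apply: contra_eq_neq e1 => ->; rewrite mul0r oner_neq0. Qed.

Lemma gunit_dvdr d u : gaussint d -> gdvd d u -> gunit u -> gunit d.
Proof. by move=> hd dDu [_ uD1]; split=> //; apply: gdvd_trans dDu uD1. Qed.

Lemma gunit_sqr u : gunit u -> u ^+ 2 = 1 \/ u ^+ 2 = -1.
Proof. by move/gunitP; case=> ->; rewrite ?sqrrN ?sqrCi ?expr1n; [left|left|right|right]. Qed.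

Lemma gunit_expr4 u : gunit u -> u ^+ 4 = 1.
Proof. by move/gunit_sqr=> u2; rewrite (exprM u 2 2); case: u2 => ->; rewrite ?sqrrN expr1n. Qed.

Lemma gunit_mem u : gunit u <-> u \in [:: 1; -1; 'i; - 'i].
Proof.
rewrite !inE; split=> [/gunitP|/or4P hu]; last by apply/gunitP; case: hu => /eqP->; constructor.
by case=> ->; rewrite eqxx ?orbT.
Qed.

Lemma gdvd_gunit_mull u x : gunit u -> gaussint x -> gdvd (u * x) x.
Proof.
by move=> [_ [q hq uq]] hx; exists q => //; rewrite mulrAC -uq mul1r.
Qed.

(** * Unique factorisation *)

Lemma real_round (x : algC) : x \is Num.real -> exists m : int, `|x - m%:~R| <= 2^-1.
Proof.
move=> xR; have hR : x + 2^-1 \is Num.real by rewrite rpredD // rpredV realn.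
exists (Num.floor (x + 2^-1)); set m := Num.floor _.
have m_le := real_floor_le hR; have lt_m1 := real_floorD1_gt hR.
rewrite -/m rmorphD /= in lt_m1.
rewrite real_ler_norml; last by rewrite rpredB // Rreal_int ?intr_int.
apply/andP; split.
  by rewrite -subr_ge0 (_ : _ - _ = x + 2^-1 - m%:~R) ?subr_ge0 //; ring.
rewrite -subr_ge0 (_ : _ - _ = m%:~R + 1 - (x + 2^-1)) ?subr_ge0 ?ltW //.
by field.
Qed.

Lemma gauss_division a b : gaussint a -> gaussint b -> b != 0 ->
  exists2 q, gaussint q & (gnorm (a - b * q)%R < gnorm b)%N.
Proof.
move=> ha hb b0; set w := a / b.
have [m1 near1] := real_round (Creal_Re w).
have [m2 near2] := real_round (Creal_Im w).
have m1R : (m1%:~R : algC) \is Num.real by rewrite Rreal_int ?intr_int.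
have m2R : (m2%:~R : algC) \is Num.real by rewrite Rreal_int ?intr_int.
pose q : algC := m1%:~R + 'i * m2%:~R.
have hq : gaussint q by apply: gaussint_rect.
exists q => //; rewrite -(ltr_nat algC) !gnormE ?gaussintB ?gaussintM //.
have -> : a - b * q = b * (w - q) by rewrite /w mulrBr mulrCA mulfV // mulr1.
rewrite normrM exprMn gtr_pMr ?exprn_gt0 ?normr_gt0 // normC2_Re_Im.
rewrite !raddfB /= Re_rect ?Im_rect //.
have sqr_half (u : algC) : u \is Num.real -> `|u| <= 2^-1 -> u ^+ 2 <= 2^-1 ^+ 2.
  by move=> uR hu; rewrite -real_normK // !expr2 ler_pM ?normr_ge0.
apply: (le_lt_trans (lerD (sqr_half _ _ near1) (sqr_half _ _ near2))); rewrite ?rpredB //.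
rewrite -subr_gt0 (_ : 1 - _ = 2^-1); first by rewrite invr_gt0 ltr0n.
by field.
Qed.

Lemma gauss_bezout a p : gaussint a -> gaussint p -> p != 0 ->
  exists g u v, [/\ gaussint u, gaussint v, g = u * a + v * p, g != 0 & gdvd g a /\ gdvd g p].
Proof.
move=> ha hp p0.
suff: forall n u v, gaussint u -> gaussint v -> u * a + v * p != 0 ->
    (gnorm (u * a + v * p)%R < n)%N -> exists g u v,
    [/\ gaussint u, gaussint v, g = u * a + v * p, g != 0 & gdvd g a /\ gdvd g p].
  by move/(_ (gnorm p).+1 0 1); rewrite mul0r mul1r add0r; apply.
(* Descent on the norm: a nonzero remainder of a or p by g is a smaller combination. *)
elim=> // n IH u v hu hv g0 ltn; set g := u * a + v * p in g0 ltn *.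
have hg : gaussint g by rewrite /g; gaussint_closed.
have [q1 hq1 lt1] := gauss_division ha hg g0.
have [q2 hq2 lt2] := gauss_division hp hg g0.
have [r10|r1n0] := eqVneq (a - g * q1) 0; last first.
  apply: (IH (1 - u * q1) (- v * q1)); try by gaussint_closed.
    by rewrite (_ : _ + _ = a - g * q1) // /g; ring.
  by rewrite (_ : _ + _ = a - g * q1); [apply: leq_trans lt1 _ | rewrite /g; ring].
have [r20|r2n0] := eqVneq (p - g * q2) 0; last first.
  apply: (IH (- u * q2) (1 - v * q2)); try by gaussint_closed.
    by rewrite (_ : _ + _ = p - g * q2) // /g; ring.
  by rewrite (_ : _ + _ = p - g * q2); [apply: leq_trans lt2 _ | rewrite /g; ring].
exists g, u, v; split=> //; split.
  by exists q1 => //; apply/eqP; rewrite -subr_eq0 r10.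
by exists q2 => //; apply/eqP; rewrite -subr_eq0 r20.
Qed.

Definition gprime p := [/\ gaussint p, (1 < gnorm p)%N &
  forall d, gaussint d -> gdvd d p -> gnorm d = 1%N \/ gnorm d = gnorm p].

Lemma gprime_gaussint p : gprime p -> gaussint p.
Proof. by case. Qed.

Lemma gprime_gt1 p : gprime p -> (1 < gnorm p)%N.
Proof. by case. Qed.

Lemma gprime_neq0 p : gprime p -> p != 0.
Proof. by case=> hp p1 _; rewrite -gnorm_eq0 // -lt0n ltnW. Qed.

Lemma gprime_ndvd_gunit p u : gprime p -> gunit u -> ~ gdvd p u.
Proof.
move=> [hp p1 _] uU /(gdvd_gnorm hp); rewrite (gunit_gnorm uU) dvdn1 => /eqP p_1.
by rewrite p_1 in p1.
Qed.

Lemma gdvd_gnorm_eq g p : gaussint g -> gdvd g p -> gnorm g = gnorm p -> p != 0 -> gdvd p g.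
Proof.
move=> hg [t ht ep] en p0.
have g0 : gnorm g != 0%N by rewrite en gnorm_eq0 // ep gaussintM.
have t1 : gnorm t = 1%N.
  move: en; rewrite ep gnormM // => /eqP; rewrite -{1}[gnorm g]muln1 eqn_mul2l.
  by rewrite (negPf g0) => /eqP.
have [_ [t' ht' tt']] := gnorm1_gunit ht t1.
by exists t' => //; rewrite ep -mulrA -tt' mulr1.
Qed.

Lemma gprime_dvd_exists x : gaussint x -> (1 < gnorm x)%N -> exists2 p, gprime p & gdvd p x.
Proof.
have [n] := ubnP (gnorm x); elim: n x => // n IH x ltxn hx x1.
have [xP|xNP] := classic (gprime x); first by exists x; last exact: gdvdd.
have [d [hd dDx /not_or_and[d_n1 d_nx]]] : exists d,
    [/\ gaussint d, gdvd d x & ~ (gnorm d = 1%N \/ gnorm d = gnorm x)].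
  apply: NNPP => nd; apply: xNP; split=> // d hd dDx.
  by apply: NNPP => h; apply: nd; exists d.
have x0 : x != 0 by rewrite -gnorm_eq0 // -lt0n ltnW.
have d_le := gdvd_gnorm_le hd dDx x0.
have d0 : gnorm d != 0%N.
  rewrite gnorm_eq0 //; apply: contra_neq x0 => d0.
  by move: dDx; rewrite d0 => -[q _ ->]; rewrite mul0r.
have [p pP pDd] : exists2 p, gprime p & gdvd p d by apply: IH => //; lia.
by exists p => //; apply: gdvd_trans pDd dDx.
Qed.

Lemma gprime_euclid p a b : gprime p -> gaussint a -> gaussint b ->
  gdvd p (a * b) -> gdvd p a \/ gdvd p b.
Proof.
move=> pP ha hb pDab; have [hp _ pD] := pP; have p0 := gprime_neq0 pP.
have [g [u [v [hu hv eg g0 [gDa gDp]]]]] := gauss_bezout ha hp p0.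
have hg : gaussint g by rewrite eg; gaussint_closed.
have [g1|gp] := pD g hg gDp; last by left; apply: gdvd_trans gDa; apply: gdvd_gnorm_eq.
right; have [_ [h hh gh]] := gnorm1_gunit hg g1.
have -> : b = h * (u * (a * b) + p * (v * b)).
  by transitivity (g * h * b); [rewrite -gh mul1r | rewrite eg; ring].
apply: gdvd_mull; first by gaussint_closed.
apply: gdvdD; first exact: gdvd_mull.
by apply: gdvd_mulr; [gaussint_closed | exact: gdvdd].
Qed.

Lemma gprime_dvdX p c n : gprime p -> gaussint c -> gdvd p (c ^+ n) -> gdvd p c.
Proof.
move=> pP hc; elim: n => [|n IH]; first by move/(gprime_ndvd_gunit pP gunit1).
by rewrite exprS => /(gprime_euclid pP hc (gaussintX n hc)) [|/IH].
Qed.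

Lemma gprime_dvd_gunit_mul p u x : gprime p -> gunit u -> gaussint x ->
  gdvd p (u * x) -> gdvd p x.
Proof.
move=> pP uU hx /(gprime_euclid pP (gunit_gaussint uU) hx) [pDu|//].
by case: (gprime_ndvd_gunit pP uU pDu).
Qed.

Definition lam : algC := 1 + 'i.

Lemma gaussint_lam : gaussint lam. Proof. exact: gaussintD. Qed.
#[local] Hint Resolve gaussint_lam : core.

Lemma gnorm_lam : gnorm lam = 2%N.
Proof.
have -> : lam = (1 : int)%:~R + 'i * (1 : int)%:~R by rewrite /lam !rmorph1 mulr1.
by rewrite gnorm_rect.
Qed.

Lemma lam_neq0 : lam != 0.
Proof. by rewrite -gnorm_eq0 // gnorm_lam. Qed.

Lemma gprime_lam : gprime lam.
Proof.
split=> //; first by rewrite gnorm_lam.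
move=> d hd /(gdvd_gnorm hd); rewrite gnorm_lam => dD2.
have : (gnorm d <= 2)%N by apply: dvdn_leq.
have : gnorm d != 0%N by apply: contraTneq dD2 => ->.
by lia.
Qed.

Definition gcoprime a b := forall d, gaussint d -> gdvd d a -> gdvd d b -> gunit d.

Lemma gcoprime_sym a b : gcoprime a b -> gcoprime b a.
Proof. by move=> ab d hd da db; apply: ab. Qed.

Lemma gcoprime_dvdl a a' b : gdvd a' a -> gcoprime a b -> gcoprime a' b.
Proof. by move=> a'Da ab d hd da' db; apply: ab => //; apply: gdvd_trans a'Da. Qed.

Lemma gcoprime_dvdr a b b' : gdvd b' b -> gcoprime a b -> gcoprime a b'.
Proof. by move=> b'Db ab d hd da db'; apply: ab => //; apply: gdvd_trans b'Db. Qed.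

Lemma gcoprime_gprimeN a b p : gcoprime a b -> gprime p -> gdvd p a -> gdvd p b -> False.
Proof.
move=> ab pP pa pb; apply: (gprime_ndvd_gunit pP (ab p (gprime_gaussint pP) pa pb)).
exact: gdvdd.
Qed.

Lemma gcoprime_gprime a b :
  (forall p, gprime p -> gdvd p a -> gdvd p b -> False) -> gcoprime a b.
Proof.
move=> noP d hd dDa dDb.
have [d0|d0] := eqVneq d 0.
  have dvd0_eq0 (x : algC) : gdvd 0 x -> x = 0 by case=> q _ ->; rewrite mul0r.
  move: dDa dDb; rewrite d0 => /dvd0_eq0 a0 /dvd0_eq0 b0; rewrite a0 b0 in noP.
  by case: (noP lam gprime_lam (gdvd0 _) (gdvd0 _)).
have [d1|d1] := eqVneq (gnorm d) 1%N; first exact: gnorm1_gunit.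
have [p pP pDd] : exists2 p, gprime p & gdvd p d.
  by apply: gprime_dvd_exists => //; move: d1; rewrite -gnorm_eq0 // in d0; lia.
by case: (noP p pP (gdvd_trans pDd dDa) (gdvd_trans pDd dDb)).
Qed.

Lemma not_gcoprime a b : ~ gcoprime a b -> exists2 p, gprime p & gdvd p a /\ gdvd p b.
Proof.
move=> nab; apply: NNPP => noP; apply: nab; apply: gcoprime_gprime => p pP pa pb.
by apply: noP; exists p.
Qed.

Lemma gcoprime_mul_sq_l a b c e : gaussint a -> gaussint b -> gaussint c -> gunit e ->
  a * b = e * c ^+ 2 -> gcoprime a b -> c != 0 ->
  exists al a', [/\ gunit al, gaussint a', a = al * a' ^+ 2 & gdvd a' c].
Proof.
move=> + hb + eU; have [n] := ubnP (gnorm c).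
elim: n a c => // n IH a c ltcn ha hc eab cab c0.
have [a1|a1] := eqVneq (gnorm a) 1%N.
  by exists a, 1; split; rewrite ?expr1n ?mulr1 //; [apply: gnorm1_gunit | apply: gdvd1].
have : e * c ^+ 2 != 0 by apply: mulf_neq0; [apply: gunit_neq0 | apply: expf_neq0].
rewrite -eab mulf_eq0 negb_or => /andP[a0 _].
have [p pP pDa] : exists2 p, gprime p & gdvd p a.
  by apply: gprime_dvd_exists => //; move: a1; rewrite -gnorm_eq0 // in a0; lia.
have hp := gprime_gaussint pP; have p0 := gprime_neq0 pP.
have [c1 hc1 ec] : gdvd p c.
  apply: (gprime_dvdX (n := 2) pP hc).
  apply: (gprime_dvd_gunit_mul pP eU); first by gaussint_closed.
  by rewrite -eab; apply: gdvd_mulr.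
have [a1' ha1 ea] := pDa.
(* p divides c^2 but not b, so p^2 divides a. *)
have [a2 ha2 ea1] : gdvd p a1'.
  have pDa1b : gdvd p (a1' * b).
    exists (e * c1 ^+ 2); first by have he := gunit_gaussint eU; gaussint_closed.
    apply: (mulfI p0); transitivity (a * b); first by rewrite ea; ring.
    by rewrite eab ec; ring.
  have [//|pDb] := gprime_euclid pP ha1 hb pDa1b.
  by case: (gcoprime_gprimeN cab pP pDa pDb).
have e2 : a2 * b = e * c1 ^+ 2.
  apply: (mulfI (mulf_neq0 p0 p0)); transitivity (a * b); first by rewrite ea ea1; ring.
  by rewrite eab ec; ring.
have c10 : c1 != 0 by apply: contra_neq c0 => c10; rewrite ec c10 mulr0.
have ltc1n : (gnorm c1 < n)%N.
  move: ltcn; rewrite ec gnormM //.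
  have := gprime_gt1 pP; have : gnorm c1 != 0%N by rewrite gnorm_eq0.
  by nia.
have a2Da : gdvd a2 a by exists (p * p); [gaussint_closed | rewrite ea ea1; ring].
have [al [a' [alU ha' ea2 a'Dc1]]] := IH a2 c1 ltc1n ha2 hc1 e2 (gcoprime_dvdl a2Da cab) c10.
exists al, (p * a'); split=> //; first by gaussint_closed.
  by rewrite ea ea1 ea2; ring.
by rewrite ec; apply: gdvd_mul => //; apply: gdvdd.
Qed.

Lemma gcoprime_mul_sq a b c e : gaussint a -> gaussint b -> gaussint c -> gunit e ->
  a * b = e * c ^+ 2 -> gcoprime a b -> c != 0 ->
  exists al be A B, [/\ gunit al /\ gunit be, al * be = e, gaussint A /\ gaussint B,
                       a = al * A ^+ 2 /\ b = be * B ^+ 2 & c = A * B].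
Proof.
move=> ha hb hc eU eab cab c0.
have [al [A [alU hA ea [B hB ec]]]] := gcoprime_mul_sq_l ha hb hc eU eab cab c0.
have [hal [al' hal' alal']] := alU.
have A0 : A != 0 by apply: contra_neq c0 => A0; rewrite ec A0 mul0r.
exists al, (al' * e), A, B; split=> //.
- split=> //; apply: gunitM => //.
  by split=> //; exists al; rewrite // mulrC.
- by rewrite mulrA -alal' mul1r.
split=> //; apply: (mulfI (mulf_neq0 (gunit_neq0 alU) (expf_neq0 2 A0))).
transitivity (al * al' * (e * (A * B) ^+ 2)); last by ring.
by rewrite -alal' mul1r -ea eab ec.
Qed.

Lemma gcoprime_mul_pow4 a b y e : gaussint a -> gaussint b -> gaussint y -> gunit e ->
  a * b = e * y ^+ 4 -> gcoprime a b -> y != 0 ->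
  exists al be r s, [/\ gunit al /\ gunit be, al * be = e, gaussint r /\ gaussint s,
                       a = al * r ^+ 4 /\ b = be * s ^+ 4 & y = r * s].
Proof.
move=> ha hb hy eU eab cab y0.
have e4 (z : algC) : z ^+ 4 = (z ^+ 2) ^+ 2 by rewrite -exprM.
have [al [be [A [B [[alU beU] albe [hA hB] [ea eb] ey2]]]]] :=
  gcoprime_mul_sq ha hb (gaussintX 2 hy) eU (etrans eab (congr1 _ (e4 y))) cab (expf_neq0 2 y0).
have [hal hbe] := (gunit_gaussint alU, gunit_gaussint beU).
have cAB : gcoprime A B.
  apply: (gcoprime_dvdl _ (gcoprime_dvdr _ cab)).
    by exists (al * A); [gaussint_closed | rewrite ea; ring].
  by exists (be * B); [gaussint_closed | rewrite eb; ring].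
have [al1 [be1 [r [s [[al1U be1U] albe1 [hr hs] [eA eB] ey]]]]] :=
  gcoprime_mul_sq hA hB hy gunit1 (etrans (esym ey2) (esym (mul1r _))) cAB y0.
exists (al * al1 ^+ 2), (be * be1 ^+ 2), r, s; split=> //.
- by split; apply: gunitM => //; rewrite expr2; apply: gunitM.
- by rewrite -albe -[RHS]mulr1 -(expr1n _ 2) -albe1; ring.
- by split; [rewrite ea eA | rewrite eb eB]; ring.
Qed.

(** * Parity and congruences modulo powers of 1 + i *)

(* Checks an identity modulo i^2 = -1 and the equation c = d, given the cofactors k and m. *)
Lemma eq_lincomb_i (a b c d k m : algC) :
  c = d -> a - b = k * (c - d) + m * ('i ^+ 2 + 1) -> a = b.
Proof.
by move=> ->; rewrite subrr mulr0 add0r sqrCi addNr mulr0 => /eqP; rewrite subr_eq0 => /eqP.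
Qed.

Lemma lam_sqr : lam ^+ 2 = 2 * 'i.
Proof. by apply: (eq_lincomb_i (k := 0) (m := 1) (erefl 0)); rewrite /lam; ring. Qed.

Lemma lam_expr4 : lam ^+ 4 = -4.
Proof. by rewrite (exprM lam 2 2) lam_sqr exprMn sqrCi; ring. Qed.

Lemma two_lam_sqr : 2 = lam ^+ 2 * - 'i.
Proof. by rewrite lam_sqr mulrN -mulrA mulCii; ring. Qed.

(* Parity in Z[i]: divisibility by the prime lam = 1 + i above 2. *)
Definition geven x := gdvd lam x.

Lemma geven_rect (m n k : int) : m + n = k * 2 -> geven (m%:~R + 'i * n%:~R).
Proof.
move=> mn; exists (k%:~R + 'i * (k - m)%:~R); first exact: gaussint_rect.
have -> : n = k * 2 - m by rewrite -mn; ring.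
apply: (eq_lincomb_i (k := 0) (m := m%:~R - k%:~R) (erefl 0)).
by rewrite /lam !(rmorphB, rmorphM) /=; ring.
Qed.

Lemma int_even_or_odd (z : int) : exists k : int, z = k * 2 \/ z = k * 2 + 1.
Proof.
exists (z %/ 2)%Z; have := divz_eq z 2.
have := modz_ge0 z (isT : 2 != 0 :> int); have := ltz_pmod z (isT : 0 < 2 :> int).
by lia.
Qed.

Lemma geven_or_sub1 x : gaussint x -> geven x \/ geven (x - 1).
Proof.
move=> /gaussintP[m [n ->]]; have [k [mn|mn]] := int_even_or_odd (m + n).
  by left; apply: geven_rect mn.
right; have -> : m%:~R + 'i * n%:~R - 1 = (m - 1)%:~R + 'i * n%:~R :> algC.
  by rewrite rmorphB /= rmorph1; ring.
by apply: (geven_rect (k := k)); rewrite -[LHS]addrAC mn; ring.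
Qed.

Lemma geven_mul2 x : gaussint x -> geven (2 * x).
Proof.
by move=> hx; exists (lam * - 'i * x); [gaussint_closed | rewrite two_lam_sqr; ring].
Qed.

Lemma gevenX x n : gaussint x -> geven (x ^+ n) -> geven x.
Proof. exact: gprime_dvdX gprime_lam. Qed.

Lemma geven_gunit_mul u x : gunit u -> gaussint x -> geven (u * x) -> geven x.
Proof. exact: gprime_dvd_gunit_mul gprime_lam. Qed.

Lemma odd_gunit u : gunit u -> ~ geven u.
Proof. exact: gprime_ndvd_gunit gprime_lam. Qed.

Lemma geven_sub_odd x y : gaussint x -> gaussint y -> ~ geven x -> ~ geven y -> geven (x - y).
Proof.
move=> hx hy ox oy.
have [//|x1] := geven_or_sub1 hx; have [//|y1] := geven_or_sub1 hy.
have -> : x - y = (x - 1) - (y - 1) by ring.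
exact: gdvdB.
Qed.

Lemma odd_sqr_mod4 x : gaussint x -> ~ geven x ->
  exists s t, [/\ s = 1 \/ s = -1, gaussint t & x ^+ 2 = s + 4 * t].
Proof.
move=> /[dup] hx /gaussintP[m [n ex]] ox.
have [k [hk|hk]] := int_even_or_odd m; have [l [hl|hl]] := int_even_or_odd n.
- by case: ox; rewrite ex; apply: (geven_rect (k := k + l)); rewrite hk hl; ring.
- exists (-1), (k%:~R ^+ 2 - l%:~R ^+ 2 - l%:~R + 'i * (k%:~R * (2 * l%:~R + 1))).
  split; [by right | by gaussint_closed |].
  rewrite ex hk hl !(rmorphD, rmorphM) /= rmorph1.
  by apply: (eq_lincomb_i (k := 0) (m := 1 + 4 * l%:~R + 4 * l%:~R ^+ 2) (erefl 0)); ring.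
- exists 1, (k%:~R ^+ 2 + k%:~R - l%:~R ^+ 2 + 'i * ((2 * k%:~R + 1) * l%:~R)).
  split; [by left | by gaussint_closed |].
  rewrite ex hk hl !(rmorphD, rmorphM) /= rmorph1.
  by apply: (eq_lincomb_i (k := 0) (m := 4 * l%:~R ^+ 2) (erefl 0)); ring.
- by case: ox; rewrite ex; apply: (geven_rect (k := k + l + 1)); rewrite hk hl; ring.
Qed.

Lemma odd_pow4_mod8 x : gaussint x -> ~ geven x -> exists2 a, gaussint a & x ^+ 4 = 1 + 8 * a.
Proof.
move=> hx ox; have [s [t [s_pm1 ht et]]] := odd_sqr_mod4 hx ox.
exists (s * t + 2 * t ^+ 2); first by case: s_pm1 => ->; gaussint_closed.
by rewrite (exprM x 2 2) et; case: s_pm1 => ->; ring.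
Qed.

Lemma four_ndvd_1_sub_i u : u = 'i \/ u = - 'i -> ~ gdvd 4 (1 - u).
Proof.
have -> : (4 : algC) = (4 : int)%:~R + 'i * (0 : int)%:~R by rewrite mulr0 addr0.
move=> u_pmi /(gdvd_gnorm (gaussint_rect 4 0)); rewrite gnorm_rect.
suff -> : gnorm (1 - u) = 2%N by [].
case: u_pmi => ->.
  have -> : 1 - 'i = (1 : int)%:~R + 'i * (-1 : int)%:~R :> algC.
    by rewrite rmorph1 rmorphN rmorph1 mulrN1.
  by rewrite gnorm_rect.
have -> : 1 - - 'i = (1 : int)%:~R + 'i * (1 : int)%:~R :> algC by rewrite rmorph1 mulr1 opprK.
by rewrite gnorm_rect.
Qed.

Lemma geven_pow4_add_odd r s e : gaussint r -> gaussint s -> ~ geven r -> ~ geven s ->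
  e = 1 \/ e = -1 -> geven (r ^+ 4 + e * s ^+ 4).
Proof.
move=> hr hs or os e_pm1.
have or4 : ~ geven (r ^+ 4) by move/(gevenX hr).
have os4 : ~ geven (s ^+ 4) by move/(gevenX hs).
have ev_sub := geven_sub_odd (gaussintX 4 hr) (gaussintX 4 hs) or4 os4.
case: e_pm1 => ->; last by rewrite mulN1r.
rewrite mul1r (_ : _ + _ = r ^+ 4 - s ^+ 4 + 2 * s ^+ 4); last by ring.
by apply: gdvdD => //; apply: geven_mul2; gaussint_closed.
Qed.

(* Modulo 4 the left side is 1 and the right side is +-i. *)
Lemma pow4_add_even_neq_isq r s x e c : gaussint r -> gaussint s -> gaussint x ->
  ~ geven r -> geven s -> ~ geven x -> e = 1 \/ e = -1 -> c = 'i \/ c = - 'i ->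
  r ^+ 4 + e * s ^+ 4 <> c * x ^+ 2.
Proof.
move=> hr hs hx or [s1 hs1 es] ox e_pm1 c_pmi eq.
have [a ha ea] := odd_pow4_mod8 hr or.
have [t [u [t_pm1 hu et]]] := odd_sqr_mod4 hx ox.
have es4 : s ^+ 4 = - 4 * s1 ^+ 4 by rewrite es exprMn lam_expr4.
apply: (@four_ndvd_1_sub_i (c * t)).
  by case: c_pmi => ->; case: t_pm1 => ->; rewrite ?mulr1 ?mulrN1 ?opprK; auto.
exists (c * u - 2 * a + e * s1 ^+ 4).
  by case: c_pmi => ->; case: e_pm1 => ->; gaussint_closed.
by rewrite ea es4 et in eq; apply: (eq_lincomb_i (k := 1) (m := 0) eq); ring.
Qed.

(* x^4 + y^4 is 2 modulo 8, so z = lam w with i w^2 = 1 modulo 4. *)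
Lemma odd_pow4_add_neq_sq x y z : gaussint x -> gaussint y -> gaussint z ->
  ~ geven x -> ~ geven y -> x ^+ 4 + y ^+ 4 <> z ^+ 2.
Proof.
move=> hx hy hz ox oy eq.
have [a ha ea] := odd_pow4_mod8 hx ox.
have [b hb eb] := odd_pow4_mod8 hy oy.
have ez : z ^+ 2 = 2 * (1 + 4 * (a + b)) by rewrite -eq ea eb; ring.
have [w hw zw] : geven z.
  by apply: (@gevenX z 2) => //; rewrite ez; apply: geven_mul2; gaussint_closed.
have ew : 'i * w ^+ 2 = 1 + 4 * (a + b).
  apply: (@mulfI _ 2); first by rewrite pnatr_eq0.
  by rewrite -ez zw exprMn lam_sqr; ring.
have ow : ~ geven w.
  move=> evw; apply: (odd_gunit gunit1).
  have -> : (1 : algC) = 'i * w ^+ 2 - 2 * (2 * (a + b)) by rewrite ew; ring.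
  apply: gdvdB; last by apply: geven_mul2; gaussint_closed.
  by apply: gdvd_mull => //; rewrite expr2; apply: gdvd_mulr.
have [t [u [t_pm1 hu et]]] := odd_sqr_mod4 hw ow.
apply: (@four_ndvd_1_sub_i ('i * t)).
  by case: t_pm1 => ->; rewrite ?mulr1 ?mulrN1; auto.
exists ('i * u - a - b); first by gaussint_closed.
by rewrite et in ew; apply: (eq_lincomb_i (k := 1) (m := 0) (esym ew)); ring.
Qed.

Lemma odd_sqr_align x y : gaussint x -> gaussint y -> ~ geven x -> ~ geven y ->
  exists u s a b, [/\ gunit u, s = 1 \/ s = -1, gaussint a /\ gaussint b,
                     x ^+ 2 = s + 4 * a & (u * y) ^+ 2 = s + 4 * b].
Proof.
move=> hx hy ox oy.
have [s [a [s_pm1 ha ea]]] := odd_sqr_mod4 hx ox.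
have [t [b [t_pm1 hb eb]]] := odd_sqr_mod4 hy oy.
have [ts|ts] : t = s \/ t = - s by case: s_pm1 t_pm1 => -> [] ->; rewrite ?opprK; auto.
  by exists 1, s, a, b; split=> //; [exact: gunit1 | rewrite mul1r eb ts].
exists 'i, s, a, (- b); split=> //; first exact: gunit_i.
  by split=> //; apply: gaussintN.
by rewrite exprMn sqrCi eb ts; ring.
Qed.

Lemma gprime_dvd_lam p : gprime p -> gdvd p lam -> geven p.
Proof.
move=> pP pDl; have [_ _ lamP] := gprime_lam; have [hp p1 _] := pP.
have [p_1|p_2] := lamP p hp pDl; first by rewrite p_1 in p1.
exact: gdvd_gnorm_eq p_2 lam_neq0.
Qed.

Lemma gprime_dvd_mul2 p w : gprime p -> gaussint w -> gdvd p (2 * w) -> geven p \/ gdvd p w.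
Proof.
move=> pP hw; rewrite two_lam_sqr expr2 -!mulrA => pD.
have hNiw : gaussint (- 'i * w) by gaussint_closed.
have [/(gprime_dvd_lam pP)|] := gprime_euclid pP gaussint_lam (gaussintM gaussint_lam hNiw) pD.
  by left.
case/(gprime_euclid pP gaussint_lam hNiw) => [/(gprime_dvd_lam pP)|]; first by left.
by right; apply: (gprime_dvd_gunit_mul pP gunit_Ni hw).
Qed.

Lemma gcoprime_half_sum_diff x y C D : gaussint x -> gaussint y -> gcoprime x y ->
  ~ geven C -> 2 * C = x ^+ 2 + y ^+ 2 -> D = x ^+ 2 - y ^+ 2 -> gcoprime C D.
Proof.
move=> hx hy cxy oC eC eD; apply: gcoprime_gprime => p pP pC pD.
have p2x : gdvd p (2 * x ^+ 2).
  rewrite (_ : 2 * x ^+ 2 = 2 * C + D); last by rewrite eC eD; ring.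
  by apply: gdvdD => //; apply: gdvd_mull.
have p2y : gdvd p (2 * y ^+ 2).
  rewrite (_ : 2 * y ^+ 2 = 2 * C - D); last by rewrite eC eD; ring.
  by apply: gdvdB => //; apply: gdvd_mull.
have [lp|px] := gprime_dvd_mul2 pP (gaussintX 2 hx) p2x; first exact/oC/(gdvd_trans lp).
have [lp|py] := gprime_dvd_mul2 pP (gaussintX 2 hy) p2y; first exact/oC/(gdvd_trans lp).
exact: (gcoprime_gprimeN cxy pP (gprime_dvdX pP hx px) (gprime_dvdX pP hy py)).
Qed.

(** * Hilbert's theorem: x^4 +- y^4 = z^2 has only trivial solutions *)

Lemma gaussint_pm1 e : e = 1 \/ e = -1 -> gaussint e.
Proof. by case=> ->; gaussint_closed. Qed.

Lemma gunit_pm1 e : e = 1 \/ e = -1 -> gunit e.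
Proof. by case=> ->; [exact: gunit1 | exact: gunitN1]. Qed.

Section Descent.

Variable e : algC.
Hypothesis e_pm1 : e = 1 \/ e = -1.

Record odd_even_solution x y z : Prop := OddEvenSolution {
  oes_gaussint : [/\ gaussint x, gaussint y & gaussint z];
  oes_coprime : gcoprime x y;
  oes_odd : ~ geven x;
  oes_even : geven y;
  oes_neq0 : y != 0;
  oes_eq : x ^+ 4 + e * y ^+ 4 = z ^+ 2 }.

Lemma gunit_e : gunit e. Proof. exact: gunit_pm1. Qed.
Lemma gaussint_e : gaussint e. Proof. exact: gaussint_pm1. Qed.
#[local] Hint Resolve gaussint_e : core.

(* z - x^2 = lam p and z + x^2 = lam q with p q = e lam^2 y'^4 and q - p = lam (-i) x^2,
   so lam divides both p and q. *)
Lemma odd_even_solution_factor x y' z : gaussint y' -> odd_even_solution x (lam * y') z ->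
  exists p q, [/\ gaussint p, gaussint q, p * q = e * y' ^+ 4 & q - p = - 'i * x ^+ 2].
Proof.
move=> hy' [[hx hy hz] _ ox _ _ eq].
have oz : ~ geven z.
  move=> evz; apply: ox; apply: (@gevenX x 4) => //.
  have -> : x ^+ 4 = z ^+ 2 - e * (lam * y') ^+ 4 by rewrite -eq; ring.
  apply: gdvdB; first by rewrite expr2; apply: gdvd_mulr.
  apply: gdvd_mull => //; rewrite exprS -mulrA.
  by apply: gdvd_mulr; [gaussint_closed | apply: gdvdd].
have ox2 : ~ geven (x ^+ 2) by move/(gevenX hx).
have [p hp ep] := geven_sub_odd hz (gaussintX 2 hx) oz ox2.
have [q hq eq'] : geven (z + x ^+ 2).
  rewrite (_ : _ + _ = z - x ^+ 2 + 2 * x ^+ 2); last by ring.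
  by apply: gdvdD; [exists p | apply: geven_mul2; gaussint_closed].
have lam2_0 : lam ^+ 2 != 0 by rewrite expf_neq0 // lam_neq0.
have epq : p * q = lam ^+ 2 * (e * y' ^+ 4).
  apply: (mulfI lam2_0); transitivity ((z - x ^+ 2) * (z + x ^+ 2)).
    by rewrite ep eq'; ring.
  rewrite (_ : (z - x ^+ 2) * _ = z ^+ 2 - x ^+ 4); last by ring.
  by rewrite -eq; ring.
have eqp : q - p = lam * (- 'i * x ^+ 2).
  apply: (mulfI lam_neq0); transitivity ((z + x ^+ 2) - (z - x ^+ 2)).
    by rewrite ep eq'; ring.
  rewrite (_ : (z + x ^+ 2) - _ = 2 * x ^+ 2); last by ring.
  by rewrite two_lam_sqr; ring.
have evpq : geven (p * q).
  by rewrite epq expr2 -mulrA; apply: gdvd_mulr; [gaussint_closed | apply: gdvdd].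
have evqp : geven (q - p) by rewrite eqp; apply: gdvd_mulr; [gaussint_closed | apply: gdvdd].
have [[p' hp' ep'] [q' hq' eq'q]] : geven p /\ geven q.
  have [evp|evq] := gprime_euclid gprime_lam hp hq evpq.
    by split=> //; rewrite -(subrK p q); apply: gdvdD.
  split=> //; rewrite (_ : p = q - (q - p)); last by ring.
  exact: gdvdB.
exists p', q'; split=> //.
  by apply: (mulfI lam2_0); rewrite -epq ep' eq'q; ring.
by apply: (mulfI lam_neq0); rewrite -eqp ep' eq'q; ring.
Qed.

Lemma odd_factor x y' p q : gaussint x -> gaussint p -> gaussint q -> ~ geven x ->
  p * q = e * y' ^+ 4 -> q - p = - 'i * x ^+ 2 ->
  exists p' q', [/\ gaussint p', gaussint q', ~ geven p', p' * q' = e * y' ^+ 4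
                 & q' - p' = - 'i * x ^+ 2].
Proof.
move=> hx hp hq ox epq eqp.
have [evp|op] := classic (geven p); last by exists p, q.
have [evq|oq] := classic (geven q).
  case: ox; apply: (@gevenX x 2) => //.
  apply: (geven_gunit_mul gunit_Ni); first by gaussint_closed.
  by rewrite -eqp; apply: gdvdB.
exists (- q), (- p); split; try gaussint_closed.
- by rewrite -mulN1r => /(geven_gunit_mul gunitN1 hq).
- by rewrite mulrNN mulrC.
- by rewrite opprK addrC.
Qed.

Lemma factors_coprime x y' p q : gaussint x -> gaussint y' -> gcoprime x y' ->
  p * q = e * y' ^+ 4 -> q - p = - 'i * x ^+ 2 -> gcoprime p q.
Proof.
move=> hx hy' cxy epq eqp; apply: gcoprime_gprime => pi piP piDp piDq.
apply: (gcoprime_gprimeN cxy piP).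
  apply: (gprime_dvdX (n := 2) piP hx); apply: (gprime_dvd_gunit_mul piP gunit_Ni).
    by gaussint_closed.
  by rewrite -eqp; apply: gdvdB.
apply: (gprime_dvdX (n := 4) piP hy'); apply: (gprime_dvd_gunit_mul piP gunit_e).
  by gaussint_closed.
by rewrite -epq; apply: gdvd_mulr => //; apply: (gdvd_gaussint (gprime_gaussint piP)).
Qed.

Lemma quartic_unit_normal r s x al be : gunit al -> al * be = e ->
  be * s ^+ 4 - al * r ^+ 4 = - 'i * x ^+ 2 ->
  (r ^+ 4 + - e * s ^+ 4 = 'i * x ^+ 2 \/ r ^+ 4 + - e * s ^+ 4 = - 'i * x ^+ 2) \/
  (r ^+ 4 + e * s ^+ 4 = x ^+ 2 \/ r ^+ 4 + e * s ^+ 4 = - x ^+ 2).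
Proof.
move=> alU albe eq.
have ebe : be = al^-1 * e by rewrite -albe mulKf ?gunit_neq0.
case/gunitP: alU => al_val; rewrite ebe al_val in eq.
- by left; left; apply: (eq_lincomb_i (k := -1) (m := 0) eq); rewrite invr1; ring.
- by left; right; apply: (eq_lincomb_i (k := 1) (m := 0) eq); rewrite invrN1; ring.
- right; left; apply: (eq_lincomb_i (k := 'i) (m := r ^+ 4 + e * s ^+ 4 - x ^+ 2) eq).
  by rewrite invCi; ring.
- right; right; apply: (eq_lincomb_i (k := - 'i) (m := r ^+ 4 + e * s ^+ 4 + x ^+ 2) eq).
  by rewrite invrN invCi opprK; ring.
Qed.

Lemma quartic_unit_cases r s x al be : gaussint r -> gaussint s -> gaussint x ->
  ~ geven r -> ~ geven x -> gunit al -> al * be = e ->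
  be * s ^+ 4 - al * r ^+ 4 = - 'i * x ^+ 2 ->
  geven s /\ exists2 w, gaussint w & r ^+ 4 + e * s ^+ 4 = w ^+ 2.
Proof.
move=> hr hs hx or ox alU albe eq.
have Ne_pm1 : - e = 1 \/ - e = -1 by case: e_pm1 => ->; rewrite ?opprK; [right | left].
have odd_x2 c : gunit c -> ~ geven (c * x ^+ 2).
  by move=> cU /(geven_gunit_mul cU (gaussintX 2 hx)) /(gevenX hx).
have [evs|os] := classic (geven s); last first.
  exfalso; have := quartic_unit_normal alU albe eq; case=> [[]|[]] eq'.
  - by apply: (odd_x2 _ gunit_i); rewrite -eq'; apply: geven_pow4_add_odd.
  - by apply: (odd_x2 _ gunit_Ni); rewrite -eq'; apply: geven_pow4_add_odd.
  - by apply: (odd_x2 _ gunit1); rewrite mul1r -eq'; apply: geven_pow4_add_odd.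
  - by apply: (odd_x2 _ gunitN1); rewrite mulN1r -eq'; apply: geven_pow4_add_odd.
split=> //; have := quartic_unit_normal alU albe eq; case=> [[]|[]] eq'.
- by case: (pow4_add_even_neq_isq hr hs hx or evs ox Ne_pm1 (or_introl erefl) eq').
- by case: (pow4_add_even_neq_isq hr hs hx or evs ox Ne_pm1 (or_intror erefl) eq').
- by exists x.
- by exists ('i * x); [gaussint_closed | rewrite eq' exprMn sqrCi mulN1r].
Qed.

(* Fermat descent: p = al r^4 and q = be s^4 with y' = r s; for each of the four units al the
   relation q - p = -i x^2 either contradicts parity modulo 4 or yields the smaller solution
   (r, s, w). *)
Lemma odd_even_solution_descent x y z : odd_even_solution x y z ->
  exists x' y' z', odd_even_solution x' y' z' /\ (gnorm y' < gnorm y)%N.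
Proof.
move=> sol; have [[hx hy hz] cxy ox [y' hy' ey] y0 _] := sol.
rewrite ey in sol cxy y0 *.
have y'0 : y' != 0 by apply: contra_neq y0 => ->; rewrite mulr0.
have [p0 [q0 [hp0 hq0 epq0 eqp0]]] := odd_even_solution_factor hy' sol.
have [p [q [hp hq op epq eqp]]] := odd_factor hx hp0 hq0 ox epq0 eqp0.
have cxy' : gcoprime x y' by apply: gcoprime_dvdr cxy; apply: gdvd_mull; [| apply: gdvdd].
have cpq := factors_coprime hx hy' cxy' epq eqp.
have [al [be [r [s [[alU beU] albe [hr hs] [ep eq] ey']]]]] :=
  gcoprime_mul_pow4 hp hq hy' gunit_e epq cpq y'0.
have or : ~ geven r.
  move=> evr; apply: op; rewrite ep; apply: gdvd_mull; first exact: gunit_gaussint.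
  by rewrite exprS; apply: gdvd_mulr; gaussint_closed.
have [evs [w hw eqw]] : geven s /\ exists2 w, gaussint w & r ^+ 4 + e * s ^+ 4 = w ^+ 2.
  by apply: (quartic_unit_cases hr hs hx or ox alU albe); rewrite -ep -eq.
have [r0 s0] : r != 0 /\ s != 0 by apply/andP; rewrite -negb_or -mulf_eq0 -ey'.
have [hal hbe] := (gunit_gaussint alU, gunit_gaussint beU).
exists r, s, w; split.
  constructor=> //; apply: (gcoprime_dvdl _ (gcoprime_dvdr _ cpq)).
    by exists (al * r ^+ 3); [gaussint_closed | rewrite ep; ring].
  by exists (be * s ^+ 3); [gaussint_closed | rewrite eq; ring].
rewrite ey' (gnormM gaussint_lam (gaussintM hr hs)) (gnormM hr hs) gnorm_lam mulnA.
have r_gt0 : (0 < gnorm r)%N by rewrite lt0n gnorm_eq0.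
have s_gt0 : (0 < gnorm s)%N by rewrite lt0n gnorm_eq0.
by rewrite ltn_Pmull //; move: r_gt0; clear; lia.
Qed.

Lemma no_odd_even_solution x y z : ~ odd_even_solution x y z.
Proof.
have [n] := ubnP (gnorm y); elim: n x y z => // n IH x y z lt_yn sol.
have [x' [y' [z' [sol' lt_y']]]] := odd_even_solution_descent sol.
exact: IH (leq_trans lt_y' _) sol'.
Qed.
End Descent.

(* C = g c^2 and D = dl (lam d1)^2, and (2C)^2 - D^2 = (2W)^2 becomes c^4 - d1^4 = +-W^2. *)
Lemma gcoprime_mul_i_sq_descent C D w W : gaussint C -> gaussint D -> gaussint w ->
  gaussint W -> gcoprime C D -> ~ geven C -> gdvd 4 D -> w != 0 ->
  C * D = 'i * w ^+ 2 -> 4 * C ^+ 2 - D ^+ 2 = 4 * W ^+ 2 ->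
  exists c d V, odd_even_solution (-1) c d V.
Proof.
move=> hC hD hw hW cCD oC [D4 hD4 eD4] w0 eCD eW.
have [g [dl [c [d [[gU dlU] gdl [hc hd] [eC eD] ewcd]]]]] :=
  gcoprime_mul_sq hC hD hw gunit_i eCD cCD w0.
have [hg hdl] := (gunit_gaussint gU, gunit_gaussint dlU).
have four_lam : (4 : algC) = lam * (- lam ^+ 3) by rewrite mulrN -exprS lam_expr4 opprK.
have [d1 hd1 ed] : geven d.
  apply: (@gevenX d 2) => //; apply: (geven_gunit_mul dlU); first by gaussint_closed.
  by rewrite -eD eD4 four_lam -mulrA; apply: gdvd_mulr; [gaussint_closed | apply: gdvdd].
have lam2_0 : lam ^+ 2 != 0 by rewrite expf_neq0 // lam_neq0.
have ed1 : dl * d1 ^+ 2 = lam * (- lam * D4).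
  apply: (mulfI lam2_0); transitivity D; first by rewrite eD ed; ring.
  by rewrite eD4 four_lam; ring.
have evd1 : geven d1.
  apply: (@gevenX d1 2) => //; apply: (geven_gunit_mul dlU); first by gaussint_closed.
  by rewrite ed1; apply: gdvd_mulr; [gaussint_closed | apply: gdvdd].
have d10 : d1 != 0 by apply: contra_neq w0 => d10; rewrite ewcd ed d10 !mulr0.
have oc : ~ geven c.
  move=> evc; apply: oC; rewrite eC; apply: gdvd_mull => //.
  by rewrite expr2; apply: gdvd_mulr.
have ccd1 : gcoprime c d1.
  apply: (gcoprime_dvdl _ (gcoprime_dvdr _ cCD)).
    by exists (g * c); [gaussint_closed | rewrite eC; ring].
  by exists (dl * lam ^+ 2 * d1); [gaussint_closed | rewrite eD ed; ring].
have eW2 : W ^+ 2 = g ^+ 2 * c ^+ 4 + dl ^+ 2 * d1 ^+ 4.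
  apply: (@mulfI _ 4); first by rewrite pnatr_eq0.
  by rewrite -eW eC eD ed four_lam; ring.
have gdl2 : g ^+ 2 * dl ^+ 2 = -1 by rewrite -exprMn gdl sqrCi.
have [g2|g2] := gunit_sqr gU; rewrite g2 ?mul1r ?mulN1r in gdl2 eW2.
  by exists c, d1, W; constructor=> //; rewrite eW2 gdl2; ring.
move/oppr_inj: gdl2 => dl2; exists c, d1, ('i * W); constructor; rewrite ?gaussintM //.
by rewrite exprMn sqrCi eW2 dl2; ring.
Qed.

(* After replacing y by u y so that x^2 = y^2 modulo 4, the factors (x^2 + y^2) / 2 and
   x^2 - y^2 of z^2 / 2 are coprime, and their product is i times a square. *)
Lemma odd_pow4_sub_neq_sq x y z : gaussint x -> gaussint y -> gaussint z -> gcoprime x y ->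
  ~ geven x -> ~ geven y -> z != 0 -> x ^+ 4 - y ^+ 4 <> z ^+ 2.
Proof.
move=> hx hy hz cxy ox oy z0 eq.
have [u [s [a [b [uU s_pm1 [ha hb] ea eb]]]]] := odd_sqr_align hx hy ox oy.
have hy0 : gaussint (u * y) by apply: gaussintM => //; apply: gunit_gaussint.
have cxy0 : gcoprime x (u * y) := gcoprime_dvdr (gdvd_gunit_mull uU hy) cxy.
have y04 : (u * y) ^+ 4 = y ^+ 4 by rewrite exprMn (gunit_expr4 uU) mul1r.
pose C := s + 2 * (a + b); pose D := 4 * (a - b).
have eC : 2 * C = x ^+ 2 + (u * y) ^+ 2 by rewrite ea eb /C; ring.
have eD : D = x ^+ 2 - (u * y) ^+ 2 by rewrite ea eb /D; ring.
have hs := gaussint_pm1 s_pm1.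
have [hC hD] : gaussint C /\ gaussint D by split; rewrite /C /D; gaussint_closed.
have oC : ~ geven C.
  move=> evC; apply: (odd_gunit (gunit_pm1 s_pm1)).
  rewrite (_ : s = C - 2 * (a + b)); last by rewrite /C; ring.
  by apply: gdvdB => //; apply: geven_mul2; gaussint_closed.
have ez : z ^+ 2 = 2 * (C * D) by rewrite -eq -y04 mulrA eC eD; ring.
have [w hw zw] : geven z.
  by apply: (@gevenX z 2) => //; rewrite ez; apply: geven_mul2; gaussint_closed.
have w0 : w != 0 by apply: contra_neq z0 => w0; rewrite zw w0 mulr0.
have eCD : C * D = 'i * w ^+ 2.
  apply: (@mulfI _ 2); first by rewrite pnatr_eq0.
  by rewrite -ez zw exprMn lam_sqr; ring.
have cCD := gcoprime_half_sum_diff hx hy0 cxy0 oC eC eD.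
have D4 : gdvd 4 D by exists (a - b); [gaussint_closed | rewrite /D].
have eW : 4 * C ^+ 2 - D ^+ 2 = 4 * (x * (u * y)) ^+ 2.
  rewrite (_ : 4 * C ^+ 2 = (2 * C) ^+ 2); last by ring.
  by rewrite eC eD; ring.
have [c [d [V sol]]] := gcoprime_mul_i_sq_descent hC hD hw (gaussintM hx hy0) cCD oC D4 w0 eCD eW.
exact: (no_odd_even_solution (or_intror erefl) sol).
Qed.

Lemma gaussint_pm1_sqr e z : e = 1 \/ e = -1 -> gaussint z ->
  exists2 w, gaussint w & e * z ^+ 2 = w ^+ 2.
Proof.
case=> -> hz; first by exists z; rewrite ?mul1r.
by exists ('i * z); [gaussint_closed | rewrite exprMn sqrCi].
Qed.

Lemma gcoprime_quartic_neq e x y z : e = 1 \/ e = -1 ->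
  gaussint x -> gaussint y -> gaussint z -> gcoprime x y ->
  x != 0 -> y != 0 -> z != 0 -> x ^+ 4 + e * y ^+ 4 <> z ^+ 2.
Proof.
move=> e_pm1 hx hy hz cxy x0 y0 z0 eq.
have [evx|ox] := classic (geven x); have [evy|oy] := classic (geven y).
- exact: gcoprime_gprimeN cxy gprime_lam evx evy.
- have [w hw ew] := gaussint_pm1_sqr e_pm1 hz.
  apply: (@no_odd_even_solution e e_pm1 y x w); constructor=> //; first exact: gcoprime_sym.
  by rewrite -ew -eq; case: e_pm1 => ->; ring.
- exact: (@no_odd_even_solution e e_pm1 x y z).
- case: e_pm1 eq => -> eq.
    by apply: (odd_pow4_add_neq_sq hx hy hz ox oy); rewrite -eq mul1r.
  by apply: (odd_pow4_sub_neq_sq hx hy hz cxy ox oy z0); rewrite -eq mulN1r.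
Qed.

Lemma quartic_div_gprime e p x y z : gaussint e -> gprime p ->
  gaussint x -> gaussint y -> gaussint z -> gdvd p x -> gdvd p y ->
  x ^+ 4 + e * y ^+ 4 = z ^+ 2 ->
  exists x1 y1 z1, [/\ gaussint x1 /\ gaussint y1 /\ gaussint z1,
    x * y * z = p ^+ 4 * (x1 * y1 * z1), x = p * x1 & x1 ^+ 4 + e * y1 ^+ 4 = z1 ^+ 2].
Proof.
move=> he pP hx hy hz [x1 hx1 ex] [y1 hy1 ey] eq.
have hp := gprime_gaussint pP; have p2_0 : p ^+ 2 != 0 by rewrite expf_neq0 ?gprime_neq0.
have ez2 : z ^+ 2 = p ^+ 2 * (p ^+ 2 * (x1 ^+ 4 + e * y1 ^+ 4)) by rewrite -eq ex ey; ring.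
have [z1 hz1 ez] : gdvd p z.
  apply: (gprime_dvdX (n := 2) pP hz); rewrite ez2 expr2 -mulrA.
  by apply: gdvd_mulr; [gaussint_closed | apply: gdvdd].
have ez1 : z1 ^+ 2 = p ^+ 2 * (x1 ^+ 4 + e * y1 ^+ 4).
  by apply: (mulfI p2_0); rewrite -ez2 ez; ring.
have [z2 hz2 ez2'] : gdvd p z1.
  apply: (gprime_dvdX (n := 2) pP hz1); rewrite ez1 expr2 -mulrA.
  by apply: gdvd_mulr; [gaussint_closed | apply: gdvdd].
exists x1, y1, z2; split=> //.
- by rewrite ex ey ez ez2'; ring.
- by apply: (mulfI p2_0); rewrite -ez1 ez2'; ring.
Qed.

Lemma quartic_trivial e x y z : e = 1 \/ e = -1 ->
  gaussint x -> gaussint y -> gaussint z -> x ^+ 4 + e * y ^+ 4 = z ^+ 2 -> x * y * z = 0.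
Proof.
move=> e_pm1; have [n] := ubnP (gnorm x).
elim: n x y z => // n IH x y z lt_xn hx hy hz eq.
apply/eqP; apply: contraT => xyz0.
have [[x0 y0] z0] : (x != 0 /\ y != 0) /\ z != 0.
  by move: xyz0; rewrite !mulf_eq0 !negb_or => /andP[/andP[-> ->] ->].
have [cxy|/not_gcoprime[p pP [px py]]] := classic (gcoprime x y).
  by case: (gcoprime_quartic_neq e_pm1 hx hy hz cxy x0 y0 z0 eq).
have [x1 [y1 [z1 [[hx1 [hy1 hz1]] exyz ex eq1]]]] :=
  quartic_div_gprime (gaussint_pm1 e_pm1) pP hx hy hz px py eq.
have lt_x1n : (gnorm x1 < n)%N.
  have x10 : x1 != 0 by apply: contra_neq x0 => x10; rewrite ex x10 mulr0.
  rewrite -ltnS; apply: leq_trans lt_xn; rewrite ltnS ex (gnormM (gprime_gaussint pP) hx1).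
  by rewrite ltn_Pmull ?gprime_gt1 // lt0n gnorm_eq0.
by rewrite exyz (IH x1 y1 z1) ?mulr0 ?eqxx in xyz0.
Qed.

(** * The equations x^4 -+ y^4 = i z^2 *)

Lemma pow4_sub_i_sqr_trivial x y z : gaussint x -> gaussint y -> gaussint z ->
  x ^+ 4 - y ^+ 4 = 'i * z ^+ 2 -> x * y * z = 0.
Proof.
move=> hx hy hz eq.
have [->|z0] := eqVneq z 0; first by rewrite mulr0.
have [->|x0] := eqVneq x 0; first by rewrite !mul0r.
have [->|y0] := eqVneq y 0; first by rewrite mulr0 mul0r.
have s0 : x ^+ 2 + y ^+ 2 != 0.
  apply: contra_neq z0 => s0; have : 'i * z ^+ 2 = 0.
    rewrite -eq (_ : _ - _ = (x ^+ 2 + y ^+ 2) * (x ^+ 2 - y ^+ 2)); last by ring.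
    by rewrite s0 mul0r.
  by move/eqP; rewrite mulf_eq0 (negPf (neq0Ci _)) expf_eq0 /= => /eqP.
have eq4 : z ^+ 4 + 1 * (x ^+ 2 + y ^+ 2) ^+ 4 = (2 * x * y * (x ^+ 2 + y ^+ 2)) ^+ 2.
  have z4 : z ^+ 4 = - (x ^+ 4 - y ^+ 4) ^+ 2 by rewrite eq exprMn sqrCi -exprM; ring.
  by rewrite z4; ring.
have xyz0 : z * (x ^+ 2 + y ^+ 2) * (2 * x * y * (x ^+ 2 + y ^+ 2)) != 0.
  by rewrite !mulf_neq0 ?pnatr_eq0.
exfalso; move/eqP: xyz0; apply; apply: (quartic_trivial (or_introl erefl) hz _ _ eq4).
  by gaussint_closed.
by gaussint_closed.
Qed.

Lemma pow4_add_i_sqr_quartic (x y z : algC) : x ^+ 4 + y ^+ 4 = 'i * z ^+ 2 ->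
  let S := z + (1 - 'i) * x * y in
  S ^+ 4 - (x ^+ 2 - y ^+ 2) ^+ 4 = ((1 - 'i) * S * (x ^+ 2 + y ^+ 2)) ^+ 2.
Proof.
move=> eq S.
have S2 : S ^+ 2 = - 'i * (x ^+ 2 + y ^+ 2) ^+ 2 + 2 * (1 - 'i) * x * y * z.
  by apply: (eq_lincomb_i (k := - 'i) (m := z ^+ 2 + x ^+ 2 * y ^+ 2) (esym eq)); rewrite /S; ring.
have Q2 : (2 * (1 - 'i) * x * y * z) ^+ 2 = - 8 * x ^+ 2 * y ^+ 2 * (x ^+ 4 + y ^+ 4).
  apply: (eq_lincomb_i (k := - 8 * x ^+ 2 * y ^+ 2) (m := 4 * x ^+ 2 * y ^+ 2 * z ^+ 2) (esym eq)).
  by ring.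
rewrite (exprM S 2 2) !exprMn S2.
apply: (eq_lincomb_i (k := 1) (m := ('i - 1) * (x ^+ 2 + y ^+ 2) ^+ 4
                                 - 2 * (1 - 'i) * x * y * z * (x ^+ 2 + y ^+ 2) ^+ 2) Q2).
by ring.
Qed.

Lemma pow4_add_i_sqr_cases x y z : gaussint x -> gaussint y -> gaussint z ->
  x ^+ 4 + y ^+ 4 = 'i * z ^+ 2 -> y ^+ 2 = x ^+ 2 \/ y ^+ 2 = - x ^+ 2.
Proof.
move=> hx hy hz eq; have := pow4_add_i_sqr_quartic eq.
set S := z + _; rewrite -(mulN1r ((x ^+ 2 - y ^+ 2) ^+ 4)) => idS.
have one_sub_i : 1 - 'i = lam * - 'i :> algC.
  by apply: (eq_lincomb_i (k := 0) (m := 1) (erefl 0)); rewrite /lam; ring.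
have one_sub_i0 : 1 - 'i != 0 :> algC.
  by rewrite one_sub_i mulf_neq0 ?lam_neq0 ?oppr_eq0 ?neq0Ci.
have hS : gaussint S by rewrite /S; gaussint_closed.
have hT : gaussint (x ^+ 2 - y ^+ 2) by gaussint_closed.
have hW : gaussint ((1 - 'i) * S * (x ^+ 2 + y ^+ 2)) by gaussint_closed.
have S_case : S == 0 -> y ^+ 2 = x ^+ 2.
  move=> S0; have ez : z = - ((1 - 'i) * x * y) by apply/eqP; rewrite -addr_eq0.
  rewrite ez in eq; have : (x ^+ 2 - y ^+ 2) ^+ 2 = 0.
    by apply: (eq_lincomb_i (k := 1) (m := x ^+ 2 * y ^+ 2 * ('i - 2)) eq); ring.
  by move/eqP; rewrite sqrf_eq0 subr_eq0 eq_sym => /eqP.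
move: (quartic_trivial (or_intror erefl) hS hT hW idS) => /eqP.
rewrite !mulf_eq0 (negPf one_sub_i0) /= -!orbA => /or4P[/S_case|T0|/S_case|P0]; auto.
  by left; apply/esym/eqP; rewrite -subr_eq0.
by right; apply/eqP; rewrite -addr_eq0 addrC.
Qed.

Lemma sqr_pm_sqr_gunit (x y : algC) : y ^+ 2 = x ^+ 2 \/ y ^+ 2 = - x ^+ 2 ->
  exists2 u, gunit u & y = u * x.
Proof.
case=> [|yx].
  move/eqP; rewrite eqf_sqr => /orP[]/eqP->; first by exists 1; rewrite ?mul1r //; exact: gunit1.
  by exists (-1); rewrite ?mulN1r //; exact: gunitN1.
have /eqP : y ^+ 2 = ('i * x) ^+ 2 by rewrite exprMn sqrCi mulN1r.
rewrite eqf_sqr => /orP[]/eqP->; first by exists 'i; first exact: gunit_i.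
by exists (- 'i); rewrite ?mulNr //; exact: gunit_Ni.
Qed.

Lemma pow4_add_i_sqr_primitive x y z : gaussint x -> gaussint y -> gaussint z ->
  x ^+ 4 + y ^+ 4 = 'i * z ^+ 2 -> gcoprime3 x y z ->
  [/\ gunit x, gunit y & z = 'i * (1 + 'i) \/ z = - ('i * (1 + 'i))].
Proof.
move=> hx hy hz eq cxyz.
have [u uU ey] := sqr_pm_sqr_gunit (pow4_add_i_sqr_cases hx hy hz eq).
have ez2 : z ^+ 2 = ((1 - 'i) * x ^+ 2) ^+ 2.
  rewrite ey exprMn (gunit_expr4 uU) mul1r in eq.
  by apply: (eq_lincomb_i (k := 'i) (m := z ^+ 2 - x ^+ 4) eq); ring.
have ez : z = (1 - 'i) * x ^+ 2 \/ z = - ((1 - 'i) * x ^+ 2).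
  by move/eqP: ez2; rewrite eqf_sqr => /orP[]/eqP; auto.
have xU : gunit x.
  apply: cxyz => //; first exact: gdvdd.
    by rewrite ey; apply: gdvd_mull; [apply: gunit_gaussint | apply: gdvdd].
  have xDz : gdvd x ((1 - 'i) * x ^+ 2).
    by rewrite expr2 mulrA; apply: gdvd_mull; [gaussint_closed | apply: gdvdd].
  by case: ez => ->; last apply: gdvdN.
split=> //; first by rewrite ey; apply: gunitM.
have e1 : 1 - 'i = - ('i * (1 + 'i)) :> algC.
  by apply: (eq_lincomb_i (k := 0) (m := 1) (erefl 0)); ring.
have [x2|x2] := gunit_sqr xU; rewrite x2 ?mulr1 ?mulrN1 ?opprK e1 ?opprK in ez.
  by case: ez; auto.
by case: ez; auto.
Qed.

Lemma pow4_add_i_sqr_units x y z : gunit x -> gunit y ->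
  z = 'i * (1 + 'i) \/ z = - ('i * (1 + 'i)) ->
  [/\ x ^+ 4 + y ^+ 4 = 'i * z ^+ 2, x * y * z != 0 & gcoprime3 x y z].
Proof.
move=> xU yU z_val.
have z2 : z ^+ 2 = - 2 * 'i.
  have iz2 : ('i * (1 + 'i)) ^+ 2 = - 2 * 'i :> algC.
    by apply: (eq_lincomb_i (k := 0) (m := 'i ^+ 2 + 2 * 'i) (erefl 0)); ring.
  by case: z_val => ->; rewrite ?sqrrN.
have z0 : z != 0.
  by case: z_val => ->; rewrite ?oppr_eq0 mulf_neq0 ?neq0Ci ?lam_neq0.
split.
- by rewrite (gunit_expr4 xU) (gunit_expr4 yU) z2 mulrCA mulCii; ring.
- by rewrite !mulf_neq0 ?(gunit_neq0 xU) ?(gunit_neq0 yU).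
- by move=> d hd dx _ _; apply: gunit_dvdr hd dx xU.
Qed.

Theorem theorem1 :
  (forall x y z : algC, gaussint x -> gaussint y -> gaussint z ->
     x ^+ 4 - y ^+ 4 = 'i * z ^+ 2 -> x * y * z = 0)
  /\
  (forall x y z : algC, gaussint x -> gaussint y -> gaussint z ->
     ((x ^+ 4 + y ^+ 4 = 'i * z ^+ 2 /\ x * y * z != 0 /\ gcoprime3 x y z) <->
      ([/\ x \in [:: 1; -1; 'i; - 'i], y \in [:: 1; -1; 'i; - 'i]
         & z \in [:: 'i * (1 + 'i); - ('i * (1 + 'i))]]))).
Proof.
split=> [x y z hx hy hz|x y z hx hy hz]; first exact: pow4_sub_i_sqr_trivial.
have z_mem : z \in [:: 'i * (1 + 'i); - ('i * (1 + 'i))] <->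
             z = 'i * (1 + 'i) \/ z = - ('i * (1 + 'i)).
  by rewrite !inE; split=> [/orP[]/eqP|[]->]; rewrite ?eqxx ?orbT; auto.
split=> [[eq [_ cxyz]]|[/gunit_mem xU /gunit_mem yU /z_mem z_val]].
  have [xU yU z_val] := pow4_add_i_sqr_primitive hx hy hz eq cxyz.
  by split; [apply/gunit_mem | apply/gunit_mem | apply/z_mem].
by have [] := pow4_add_i_sqr_units xU yU z_val.
Qed.
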